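(* Let $K\ge 3$, $d_2,\dots,d_K\ge 2$, $k\ge 1$ and $d_1=d_2\cdots d_K-k\ge 1$. If $\mathbb{C}^{k}\otimes\mathbb{C}^{d_2}\otimes\cdots\otimes\mathbb{C}^{d_K}$ has only finitely many SLOCC equivalence classes, then $\mathbb{C}^{d_1}\otimes\mathbb{C}^{d_2}\otimes\cdots\otimes\mathbb{C}^{d_K}$ has only finitely many SLOCC equivalence classes of SLOCC maximal states.
   Context: For a multipartite space $\mathbb{C}^{e_1}\otimes\cdots\otimes\mathbb{C}^{e_m}$ with parties the tensor factors, $|\psi\rangle\le_{\mathrm{SLOCC}}|\phi\rangle$ means $(L_1\otimes\cdots\otimes L_m)|\phi\rangle=|\psi\rangle$ for some linear operators $L_i$ on $\mathbb{C}^{e_i}$; two states are SLOCC equivalent if each is $\le_{\mathrm{SLOCC}}$ the other (equivalently, related by $L_1\otimes\cdots\otimes L_m$ with all $L_i$ invertible). A state $|\phi\rangle$ is SLOCC maximal if for every $|\psi\rangle$ in the space, $|\phi\rangle\le_{\mathrm{SLOCC}}|\psi\rangle$ implies $|\psi\rangle\le_{\mathrm{SLOCC}}|\phi\rangle$. *)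

From HB Require Import structures.
From mathcomp Require Import all_boot all_order all_algebra.
Set Implicit Arguments. Unset Strict Implicit. Unset Printing Implicit Defensive.
Import Order.TTheory GRing.Theory Num.Theory.
Local Open Scope ring_scope.

(* Multi-indices of C^{d_0} (x) ... (x) C^{d_{K-1}}: the parties are 'I_K. *)
Definition midx (K : nat) (d : 'I_K -> nat) := {dffun forall i : 'I_K, 'I_(d i)}.

(* A state (tensor) = its coordinate function in the product basis. *)
Definition tensor (F : Type) (K : nat) (d : 'I_K -> nat) := midx d -> F.

Definition local_op (F : comNzRingType) (K : nat) (d : 'I_K -> nat)
  (L : forall i : 'I_K, 'M[F]_(d i)) (phi : tensor F d) : tensor F d :=
  fun j => \sum_(j' : midx d) (\prod_(i < K) L i (j i) (j' i)) * phi j'.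

Definition slocc_le (F : comNzRingType) (K : nat) (d : 'I_K -> nat)
  (psi phi : tensor F d) : Prop :=
  exists L : forall i : 'I_K, 'M[F]_(d i), local_op L phi = psi.

Definition slocc_equiv (F : comNzRingType) (K : nat) (d : 'I_K -> nat)
  (psi phi : tensor F d) : Prop := slocc_le psi phi /\ slocc_le phi psi.

Definition slocc_maximal (F : comNzRingType) (K : nat) (d : 'I_K -> nat)
  (phi : tensor F d) : Prop :=
  forall psi : tensor F d, slocc_le phi psi -> slocc_le psi phi.

Definition finitely_many_classes (F : comNzRingType) (K : nat) (d : 'I_K -> nat) : Prop :=
  exists (n : nat) (r : 'I_n -> tensor F d),
    forall phi : tensor F d, exists m : 'I_n, slocc_equiv phi (r m).

Definition finitely_many_maximal_classes (F : comNzRingType) (K : nat) (d : 'I_K -> nat) : Prop :=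
  exists (n : nat) (r : 'I_n -> tensor F d),
    forall phi : tensor F d, slocc_maximal phi -> exists m : 'I_n, slocc_equiv phi (r m).

From HB Require Import structures.
From mathcomp Require Import all_boot all_order all_algebra.
From Stdlib Require Import FunctionalExtensionality ClassicalEpsilon.
Set Implicit Arguments. Unset Strict Implicit. Unset Printing Implicit Defensive.
Import Order.TTheory GRing.Theory Num.Theory.
Local Open Scope ring_scope.

(* The proof works over any field.

   Flatten a state phi of the big space across the cut (party 1 | rest) into a
   d_1 x N matrix P.  A maximal state has P of full row rank d_1, so the
   orthogonal complement of its row space has dimension k; a basis S of it is
   a k x N matrix, i.e. a state of the small space (its "complement").  Local
   operators act on flattenings as X |-> A X R^T with R a Kronecker product.
   The key fact is that equivalent complements force comparable states: two
   equivalent states are related by INVERTIBLE local operators (a Fitting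
   lemma argument), which transports orthogonality; by double orthogonality
   the twisted flattening of phi lies in the row space of that of psi.  Hence
   picking one maximal state per complement class gives finitely many classes. *)

Section ProductOfSums.
Variables (R : comNzRingType) (I : finType) (T_ : I -> finType).

Lemma prod_sum_dffun (G : forall i : I, T_ i -> R) :
  \prod_(i : I) \sum_(a : T_ i) G i a =
  \sum_(f : {dffun forall i : I, T_ i}) \prod_(i : I) G i (f i).
Proof.
pose P_ := fun i => [ffun a => G i a].
transitivity (\prod_(i : I) \sum_(a : T_ i) P_ i a).
  by apply: eq_bigr => i _; apply: eq_bigr => a _; rewrite ffunE.
under eq_bigr do rewrite (big_tag (op := +%R) P_).
rewrite (bigA_distr_big_dep (fun i => tagged_with T_ i)).
rewrite -(@big_fprod R 0 1 *%R +%R I T_ P_).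
rewrite (reindex (@fprod_of_dffun I T_)); last exact/onW_bij/fprod_of_dffun_bij.
apply: eq_bigr => f _; apply: eq_bigr => i _.
by rewrite /fprod_of_dffun fprodE ffunE.
Qed.

End ProductOfSums.

Section LocalOperators.
Variables (F : comNzRingType) (K : nat) (e : 'I_K -> nat).
Local Notation ops := (forall i : 'I_K, 'M[F]_(e i)).

Definition kron_coef (L : ops) (j j' : midx e) : F := \prod_(i < K) L i (j i) (j' i).

Definition ops_mul (L M : ops) : ops := fun i => L i *m M i.

Lemma local_opE (L : ops) (phi : tensor F e) j :
  local_op L phi j = \sum_(j' : midx e) kron_coef L j j' * phi j'.
Proof. by []. Qed.

Lemma kron_coef_mul (L M : ops) j j'' :
  \sum_(j' : midx e) kron_coef L j j' * kron_coef M j' j'' =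
  kron_coef (ops_mul L M) j j''.
Proof.
rewrite /kron_coef /ops_mul; under [RHS]eq_bigr do rewrite mxE.
rewrite (prod_sum_dffun (fun i a => L i (j i) a * M i a (j'' i))).
by apply: eq_bigr => f _; rewrite big_split.
Qed.

Lemma local_op_mul (L M : ops) (phi : tensor F e) :
  local_op L (local_op M phi) = local_op (ops_mul L M) phi.
Proof.
apply: functional_extensionality => j; rewrite !local_opE.
under eq_bigr do rewrite local_opE big_distrr.
rewrite exchange_big; apply: eq_bigr => j'' _.
rewrite -kron_coef_mul big_distrl; apply: eq_bigr => j' _.
exact: mulrA.
Qed.

Lemma kron_coef1 j j' : kron_coef (fun i => 1%:M) j j' = (j == j')%:R.
Proof.
rewrite /kron_coef; have [->|neq_jj'] := eqVneq j j'.
  by rewrite big1 // => i _; rewrite mxE eqxx.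
have [i neq_i] : exists i, j i != j' i.
  apply/existsP; apply: contraR neq_jj' => /existsPn eq_all.
  by apply/eqP/ffunP => i; apply/eqP; move: (eq_all i); rewrite negbK.
by rewrite (bigD1 i) //= mxE (negbTE neq_i) mul0r.
Qed.

Lemma local_op1 (phi : tensor F e) : local_op (fun i => 1%:M) phi = phi.
Proof.
apply: functional_extensionality => j; rewrite local_opE.
rewrite (bigD1 j) //= kron_coef1 eqxx mul1r big1 ?addr0 // => j' neq_j'j.
by rewrite kron_coef1 eq_sym (negbTE neq_j'j) mul0r.
Qed.

Lemma slocc_le_trans (x y z : tensor F e) :
  slocc_le x y -> slocc_le y z -> slocc_le x z.
Proof. by move=> [A <-] [B <-]; exists (ops_mul A B); rewrite local_op_mul. Qed.

End LocalOperators.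

Section MatrixFacts.
Variable F : fieldType.

(* Powers of a square matrix of arbitrary (possibly zero) size. *)
Definition mxpow n (A : 'M[F]_n) m : 'M[F]_n := iter m (mulmx A) 1%:M.

Lemma mxpowS n (A : 'M[F]_n) m : mxpow A m.+1 = A *m mxpow A m.
Proof. by []. Qed.

Lemma mxpowSr n (A : 'M[F]_n) m : mxpow A m.+1 = mxpow A m *m A.
Proof.
elim: m => [|m IHm]; first by rewrite /mxpow /= mulmx1 mul1mx.
by rewrite mxpowS [in LHS]IHm mulmxA.
Qed.

(* The row spaces of the powers of A decrease, and once two consecutive ones
   coincide all later ones do; since the rank can drop at most n times, the
   rank of A ^ m is constant for m >= n (a form of Fitting's lemma). *)
Lemma mxpow_rank_stable n (A : 'M[F]_n) m : (n <= m)%N ->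
  \rank (mxpow A m.+1) = \rank (mxpow A m).
Proof.
pose stable j := (mxpow A j <= mxpow A j.+1)%MS.
have decr j : (mxpow A j.+1 <= mxpow A j)%MS by rewrite mxpowS submxMl.
have stableS j : stable j -> stable j.+1.
  by move=> st_j; rewrite /stable mxpowSr [X in (_ <= X)%MS]mxpowSr submxMr.
have early_stable : exists2 j, (j <= n)%N & stable j.
  have drop j : (forall i, (i < j)%N -> ~~ stable i) -> (\rank (mxpow A j) + j <= n)%N.
    elim: j => [_|j IHj unst]; first by rewrite addn0 mxrank1.
    have lt_rk := ltn_leqif (mxrank_leqif_sup (decr j)).
    rewrite addnS (leq_trans _ (IHj _)) ?ltn_add2r ?lt_rk ?unst //.
    by move=> i lt_ij; apply: unst; apply: ltnW.
  case/boolP: [exists j : 'I_n.+1, stable j] => [/existsP[j st_j]|/existsPn unst].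
    by exists j; rewrite // -ltnS.
  have := drop n.+1 (fun i lt_i => unst (Ordinal lt_i)).
  by rewrite addnS ltnNge leq_addl.
case: early_stable => j le_jn stable_j le_nm.
have stable_m : stable m.
  have le_jm := leq_trans le_jn le_nm.
  by rewrite -(subnK le_jm); elim: (m - j)%N => //= i; apply: stableS.
by apply/eqP; rewrite eqn_leq !mxrankS.
Qed.

(* Transposed form of complete_unitmx: a matrix that is injective on the
   column space of H agrees there with an invertible matrix. *)
Lemma complete_unitmx_left m n (A : 'M[F]_m) (H : 'M[F]_(m, n)) :
  \rank (A *m H) = \rank H -> {C : 'M[F]_m | C \in unitmx & C *m H = A *m H}.
Proof.
move=> rAH; have rT : \rank (H^T *m A^T) = \rank H^T by rewrite -trmx_mul !mxrank_tr.
have [G uG eG] := complete_unitmx rT.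
exists G^T; first by rewrite unitmx_tr.
by apply: trmx_inj; rewrite !trmx_mul trmxK eG.
Qed.

End MatrixFacts.

Section InvertibleEquivalence.
Variables (F : fieldType) (K : nat) (e : 'I_K -> nat).
Local Notation ops := (forall i : 'I_K, 'M[F]_(e i)).

(* If x = A y and y = B x, then G := B A fixes y, hence so does H := G ^ M
   for M >= every e i; by Fitting stabilisation A is injective on the column
   space of each H i, so A H = C H for invertible C, and x = A H y = C H y = C y. *)
Lemma slocc_equiv_invertible (x y : tensor F e) :
  slocc_le x y -> slocc_le y x ->
  exists C : ops, (forall i, C i \in unitmx) /\ local_op C y = x.
Proof.
move=> [A Ay] [B Bx].
pose G := ops_mul B A; pose M := (\sum_(i < K) e i)%N.
pose H : ops := fun i => mxpow (G i) M.
have fixG m : local_op (fun i => mxpow (G i) m) y = y.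
  elim: m => [|m IHm]; first exact: local_op1.
  change (local_op (ops_mul G (fun i => mxpow (G i) m)) y = y).
  by rewrite -local_op_mul IHm -local_op_mul Ay Bx.
have injA i : \rank (A i *m H i) = \rank (H i).
  apply/eqP; rewrite eqn_leq mxrankM_maxr /=.
  have le_eM : (e i <= M)%N by rewrite /M (bigD1 i) //= leq_addr.
  rewrite /H -(mxpow_rank_stable (G i) le_eM) mxpowS /G /ops_mul -mulmxA.
  exact: mxrankM_maxr.
pose C : ops := fun i => s2val (complete_unitmx_left (injA i)).
exists C; split => [i|]; first exact: s2valP (complete_unitmx_left (injA i)).
have CH : ops_mul C H = ops_mul A H.
  apply: functional_extensionality_dep => i.
  exact: s2valP' (complete_unitmx_left (injA i)).
by rewrite -(fixG M) local_op_mul CH -local_op_mul fixG.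
Qed.

End InvertibleEquivalence.

Section FirstPartyFlattening.
Variables (F : comNzRingType) (K' : nat) (d : nat -> nat).
Local Notation K := K'.+1.

(* The dimension vector whose first party has dimension c.+1 and whose party
   i > 0 has dimension d i, written (d i).-1.+1 so that every index type is
   inhabited (in the application d i > 0). *)
Definition dims (c : nat) : 'I_K -> nat :=
  fun i => (if nat_of_ord i == 0%N then c else (d i).-1).+1.

(* Joint indices of the parties other than the first, encoded as
   multi-indices whose first component ranges over a singleton. *)
Definition Rest := midx (dims 0).

(* Reinterpret an index of party i across two dimension vectors; for i > 0
   both vectors agree and this is the identity on values. *)
Definition recast c c' (i : 'I_K) (x : 'I_(dims c i)) : 'I_(dims c' i) :=
  insubd ord0 (val x).

Lemma ltn_dims c c' (i : 'I_K) v :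
  nat_of_ord i != 0%N -> (v < dims c i)%N = (v < dims c' i)%N.
Proof. by rewrite /dims => /negbTE ->. Qed.

Lemma ltn_dims0 c (i : 'I_K) v : nat_of_ord i = 0%N -> (v < dims c i)%N = (v < c.+1)%N.
Proof. by rewrite /dims => ->. Qed.

Lemma val_recast c c' i (x : 'I_(dims c i)) :
  nat_of_ord i != 0%N -> val (recast c' x) = val x.
Proof.
move=> i_neq0; rewrite /recast val_insubd; case: ifP => // /negP[].
by have := ltn_ord x; rewrite (ltn_dims c c' _ i_neq0).
Qed.

Lemma recastK c c' i (x : 'I_(dims c i)) :
  nat_of_ord i != 0%N -> recast c (recast c' x) = x.
Proof. by move=> i_neq0; apply: val_inj; rewrite !val_recast. Qed.

Lemma recast_recast c c' c'' i (x : 'I_(dims c i)) :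
  nat_of_ord i != 0%N -> recast c'' (recast c' x) = recast c'' x.
Proof. by move=> i_neq0; apply: val_inj; rewrite !val_recast. Qed.

Lemma first_idx_trivial i (x y : 'I_(dims 0 i)) : nat_of_ord i = 0%N -> x = y.
Proof.
move=> i0; apply: val_inj; have := ltn_ord x; have := ltn_ord y.
rewrite !(ltn_dims0 0 _ i0) !ltnS !leqn0 => /eqP y0 /eqP x0.
exact: etrans x0 (esym y0).
Qed.

Definition join_val c (a : 'I_c.+1) (q : Rest) (i : 'I_K) : nat :=
  if nat_of_ord i == 0%N then val a else val (q i).

Lemma join_val_rest c (a : 'I_c.+1) q i :
  nat_of_ord i != 0%N -> join_val a q i = val (q i).
Proof. by rewrite /join_val => /negbTE ->. Qed.

Definition join_idx c (a : 'I_c.+1) (q : Rest) : midx (dims c) :=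
  [ffun i => insubd ord0 (join_val a q i)].

Definition rest_idx c (j : midx (dims c)) : Rest := [ffun i => recast 0 (j i)].

Lemma join_idx0 c (a : 'I_c.+1) q : join_idx a q ord0 = a.
Proof. by rewrite ffunE; apply: val_inj; rewrite /= val_insubd ltn_ord. Qed.

Lemma join_idx_rest c (a : 'I_c.+1) q i :
  nat_of_ord i != 0%N -> join_idx a q i = recast c (q i).
Proof. by move=> i_neq0; rewrite ffunE join_val_rest. Qed.

Lemma rest_join c (a : 'I_c.+1) q : rest_idx (join_idx a q) = q.
Proof.
apply/ffunP => i; rewrite ffunE.
have [i0|i_neq0] := eqVneq (nat_of_ord i) 0%N; first exact: first_idx_trivial.
by rewrite join_idx_rest // recastK.
Qed.

Lemma join_rest c (j : midx (dims c)) : join_idx (j ord0) (rest_idx j) = j.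
Proof.
apply/ffunP => i; have [i0|i_neq0] := eqVneq (nat_of_ord i) 0%N.
  have i_ord0 : i = ord0 by apply: val_inj.
  by subst i; rewrite join_idx0.
by rewrite join_idx_rest // ffunE recastK.
Qed.

Lemma sum_join c (G : midx (dims c) -> F) :
  \sum_(j : midx (dims c)) G j = \sum_(a : 'I_c.+1) \sum_(q : Rest) G (join_idx a q).
Proof.
rewrite pair_big /= (reindex (fun p : 'I_c.+1 * Rest => join_idx p.1 p.2)) //.
exists (fun j : midx (dims c) => (j ord0, rest_idx j)) => [[a q] _|j _].
  by rewrite join_idx0 rest_join.
by rewrite join_rest.
Qed.

Lemma sum_Rest (G : 'I_#|Rest| -> F) : \sum_t G t = \sum_(q : Rest) G (enum_rank q).
Proof.
rewrite (reindex (@enum_rank Rest)) //.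
by exists enum_val => t _; rewrite ?enum_rankK ?enum_valK.
Qed.

Definition flat c (x : tensor F (dims c)) : 'M[F]_(c.+1, #|Rest|) :=
  \matrix_(a, t) x (join_idx a (enum_val t)).

Definition unflat c (X : 'M[F]_(c.+1, #|Rest|)) : tensor F (dims c) :=
  fun j => X (j ord0) (enum_rank (rest_idx j)).

Lemma unflatK c : cancel (@unflat c) (@flat c).
Proof.
move=> X; apply/matrixP => a t.
by rewrite mxE /unflat join_idx0 rest_join enum_valK.
Qed.

Lemma flatK c : cancel (@flat c) (@unflat c).
Proof.
move=> x; apply: functional_extensionality => j.
by rewrite /unflat mxE enum_rankK join_rest.
Qed.

Lemma flat_inj c : injective (@flat c).
Proof. exact: can_inj (@flatK c). Qed.

Definition rest_ops c (L : forall i : 'I_K, 'M[F]_(dims c i)) :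
    forall i : 'I_K, 'M[F]_(dims 0 i) :=
  fun i => \matrix_(a, b)
    (if nat_of_ord i == 0%N then 1 else L i (recast c a) (recast c b)).

Definition rest_kron c (L : forall i : 'I_K, 'M[F]_(dims c i)) : 'M[F]_#|Rest| :=
  \matrix_(t, t') kron_coef (rest_ops L) (enum_val t) (enum_val t').

Lemma kron_coef_join c L (a b : 'I_c.+1) q q' :
  kron_coef L (join_idx a q) (join_idx b q') = L ord0 a b * kron_coef (rest_ops L) q q'.
Proof.
rewrite /kron_coef !big_ord_recl !join_idx0 mxE /= mul1r; congr (_ * _).
by apply: eq_bigr => i _; rewrite mxE /= !join_idx_rest.
Qed.

Lemma flat_local_op c L (x : tensor F (dims c)) :
  flat (local_op L x) = L ord0 *m flat x *m (rest_kron L)^T.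
Proof.
apply/matrixP => a t; rewrite !mxE local_opE sum_join.
under eq_bigr do under eq_bigr do rewrite kron_coef_join.
under [RHS]eq_bigr do rewrite !mxE big_distrl.
rewrite sum_Rest exchange_big; apply: eq_bigr => b _; apply: eq_bigr => q _.
by rewrite !mxE enum_rankK mulrAC.
Qed.

Lemma rest_ops_mul c (L M : forall i : 'I_K, 'M[F]_(dims c i)) i :
  rest_ops L i *m rest_ops M i = rest_ops (ops_mul L M) i.
Proof.
apply/matrixP => a b; rewrite /rest_ops !mxE; under eq_bigr do rewrite !mxE.
have [i0|i_neq0] := eqVneq (nat_of_ord i) 0%N.
  by rewrite mulr1 sumr_const card_ord /dims i0.
rewrite (reindex (@recast c 0 i)) /=; last first.
  by exists (@recast 0 c i) => k _; rewrite recastK.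
by apply: eq_bigr => k _; rewrite recastK.
Qed.

Lemma rest_kron_mul c (L M : forall i : 'I_K, 'M[F]_(dims c i)) :
  rest_kron L *m rest_kron M = rest_kron (ops_mul L M).
Proof.
apply/matrixP => t t''; rewrite !mxE sum_Rest.
under eq_bigr do rewrite !mxE enum_rankK.
by rewrite kron_coef_mul; apply: eq_bigr => i _; rewrite /ops_mul rest_ops_mul.
Qed.

Lemma rest_kron_tr c (L : forall i : 'I_K, 'M[F]_(dims c i)) :
  rest_kron (fun i => (L i)^T) = (rest_kron L)^T.
Proof.
apply/matrixP => t t'; rewrite !mxE; apply: eq_bigr => i _.
by rewrite /rest_ops !mxE; case: ifP.
Qed.

Lemma rest_kron1 c : rest_kron (fun i : 'I_K => (1%:M : 'M[F]_(dims c i))) = 1%:M.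
Proof.
apply/matrixP => t t'; rewrite !mxE -(inj_eq enum_val_inj) -kron_coef1.
apply: eq_bigr => i _; rewrite /rest_ops !mxE.
have [i0|i_neq0] := eqVneq (nat_of_ord i) 0%N.
  by rewrite (first_idx_trivial (enum_val t i) (enum_val t' i) i0) eqxx.
by rewrite (inj_eq (can_inj (fun x => @recastK 0 c i x i_neq0))).
Qed.

Definition with_first c (M0 : 'M[F]_c.+1) c' (T : forall i : 'I_K, 'M[F]_(dims c' i)) :
    forall i : 'I_K, 'M[F]_(dims c i) :=
  fun i => \matrix_(a, b) (if nat_of_ord i == 0%N
    then M0 (insubd ord0 (val a)) (insubd ord0 (val b))
    else T i (recast c' a) (recast c' b)).

Lemma with_first0 c M0 c' T : @with_first c M0 c' T ord0 = M0.
Proof. by apply/matrixP => a b; rewrite mxE /= !valKd. Qed.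

Lemma rest_kron_with_first c M0 c' T : rest_kron (@with_first c M0 c' T) = rest_kron T.
Proof.
apply/matrixP => t t'; rewrite !mxE; apply: eq_bigr => i _.
rewrite /rest_ops /with_first !mxE.
by have [//|i_neq0] := eqVneq (nat_of_ord i) 0%N; rewrite !recast_recast.
Qed.

End FirstPartyFlattening.

Lemma card_Rest K' (d : nat -> nat) :
  (forall i : nat, (1 <= i < K'.+1)%N -> (0 < d i)%N) ->
  #|Rest K' d| = (\prod_(1 <= i < K'.+1) d i)%N.
Proof.
move=> d_gt0; rewrite card_dep_ffun foldrE big_image /=.
under eq_bigr do rewrite card_ord.
rewrite big_ord_recl /= mul1n big_add1 /= big_mkord.
by apply: eq_bigr => i _; rewrite /dims /= prednK // d_gt0 //= ltnS ltn_ord.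
Qed.

Section ComplementDuality.
Variables (F : fieldType) (K' : nat) (d : nat -> nat) (c0 ck : nat).
Local Notation K := K'.+1.
Local Notation dims := (@dims K' d).
Local Notation Rest := (Rest K' d).

(* The other parties have c0.+1 + ck.+1 joint dimensions: a full-rank
   flattening of a state of the big space has a (ck.+1)-dimensional
   orthogonal complement, itself the flattening of a state of the small space. *)
Hypothesis card_Rest_split : #|Rest| = (c0.+1 + ck.+1)%N.

Lemma slocc_le_flat_rank c (x y : tensor F (dims c)) :
  slocc_le x y -> (\rank (flat x) <= \rank (flat y))%N.
Proof.
move=> [L <-]; rewrite flat_local_op.
by apply: leq_trans (mxrankM_maxl _ _) _; apply: mxrankM_maxr.
Qed.

(* A SLOCC maximal state has a flattening of full row rank: otherwise it is
   a first-party reduction of a state whose flattening has full row rank. *)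
Lemma maximal_flat_full (phi : tensor F (dims c0)) :
  slocc_maximal phi -> \rank (flat phi) = c0.+1.
Proof.
move=> phi_max; set P := flat phi.
apply/eqP; rewrite eqn_leq rank_leq_row /= leqNgt; apply/negP => lt_rP.
pose Psi := (pid_mx c0.+1 : 'M[F]_(c0.+1, #|Rest|)) *m row_ebase P.
have rPsi : \rank Psi = c0.+1.
  rewrite mxrankMfree ?row_free_unit ?row_ebase_unit // rank_pid_mx //.
  by rewrite card_Rest_split leq_addr.
pose A := col_ebase P *m (pid_mx (\rank P) : 'M[F]_c0.+1).
have phi_le : slocc_le phi (unflat Psi).
  exists (with_first A (fun i : 'I_K => (1%:M : 'M[F]_(dims c0 i)))).
  apply: flat_inj; rewrite flat_local_op with_first0 rest_kron_with_first.
  rewrite rest_kron1 trmx1 mulmx1 unflatK /A /Psi -mulmxA (mulmxA (pid_mx _)).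
  have le_rP := rank_leq_row P.
  by rewrite mul_pid_mx (minn_idPl le_rP) (minn_idPr le_rP) mulmxA mulmx_ebase.
have := slocc_le_flat_rank (phi_max _ phi_le).
by rewrite unflatK rPsi leqNgt lt_rP.
Qed.

Definition compl_mx (phi : tensor F (dims c0)) : 'M[F]_(ck.+1, #|Rest|) :=
  (pid_mx ck.+1 : 'M[F]_(ck.+1, #|Rest|)) *m row_ebase (kermx (flat phi)^T).

Definition compl_state (phi : tensor F (dims c0)) : tensor F (dims ck) :=
  unflat (compl_mx phi).

Lemma compl_mxP phi : \rank (flat phi) = c0.+1 ->
  \rank (compl_mx phi) = ck.+1 /\ compl_mx phi *m (flat phi)^T = 0.
Proof.
move=> rP; set Ker := kermx (flat phi)^T.
have rKer : \rank Ker = ck.+1.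
  by rewrite mxrank_ker mxrank_tr rP card_Rest_split addKn.
have le_kN : (ck.+1 <= #|Rest|)%N by rewrite card_Rest_split leq_addl.
split; first by rewrite mxrankMfree ?row_free_unit ?row_ebase_unit // rank_pid_mx.
apply/sub_kermxP; rewrite /compl_mx -/Ker.
have -> : (pid_mx ck.+1 : 'M[F]_(ck.+1, #|Rest|)) *m row_ebase Ker =
    (pid_mx ck.+1 : 'M[F]_(ck.+1, #|Rest|)) *m (pid_mx (\rank Ker) *m row_ebase Ker).
  by rewrite mulmxA mul_pid_mx rKer minnn (minn_idPr le_kN).
have -> : (pid_mx (\rank Ker) : 'M[F]_#|Rest|) *m row_ebase Ker =
    invmx (col_ebase Ker) *m Ker.
  by rewrite -{4}(mulmx_ebase Ker) -!mulmxA mulKmx ?col_ebase_unit.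
by rewrite mulmxA submxMl.
Qed.

Lemma orthogonal_compl_sub p (P : 'M[F]_(c0.+1, #|Rest|)) (S : 'M[F]_(ck.+1, #|Rest|))
    (Y : 'M[F]_(p, #|Rest|)) :
  \rank P = c0.+1 -> \rank S = ck.+1 -> S *m P^T = 0 -> Y *m S^T = 0 -> (Y <= P)%MS.
Proof.
move=> rP rS SP0 YS0.
have sub_P : (P <= kermx S^T)%MS.
  by apply/sub_kermxP; rewrite -[P]trmxK -trmx_mul SP0 trmx0.
have rKer : \rank (kermx S^T) = c0.+1.
  by rewrite mxrank_ker mxrank_tr rS card_Rest_split addnK.
have Ker_sub : (kermx S^T <= P)%MS by rewrite -(mxrank_leqif_sup sub_P).2 rP rKer.
by apply: submx_trans Ker_sub; apply/sub_kermxP.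
Qed.

(* If the complements of two maximal states are SLOCC equivalent, then the
   states are comparable: an invertible local operator C maps the complement
   of psi to that of phi, so the flattening of phi, twisted by the other
   parties' part R of C, is orthogonal to the complement of psi and hence is
   a first-party transform of the flattening of psi; undoing R gives phi <= psi. *)
Lemma compl_state_equiv_le (phi psi : tensor F (dims c0)) :
  slocc_maximal phi -> slocc_maximal psi ->
  slocc_equiv (compl_state phi) (compl_state psi) -> slocc_le phi psi.
Proof.
move=> phi_max psi_max [le_phi_psi le_psi_phi].
have [C [C_unit C_psi]] := slocc_equiv_invertible le_phi_psi le_psi_phi.
have rphi := maximal_flat_full phi_max; have rpsi := maximal_flat_full psi_max.
have [_ S_phi0] := compl_mxP rphi; have [rS_psi S_psi0] := compl_mxP rpsi.
set R := rest_kron C.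
have S_phi : compl_mx phi = C ord0 *m compl_mx psi *m R^T.
  by rewrite -[compl_mx phi]unflatK -/(compl_state phi) -C_psi flat_local_op unflatK.
have R_inv : R *m rest_kron (fun i => invmx (C i)) = 1%:M.
  rewrite rest_kron_mul -(rest_kron1 F K' d ck); congr rest_kron.
  by apply: functional_extensionality_dep => i; rewrite /ops_mul mulmxV.
have twisted_orth : flat phi *m R *m (compl_mx psi)^T = 0.
  have S_R_orth : compl_mx psi *m (R^T *m (flat phi)^T) = 0.
    move: S_phi0; rewrite S_phi -!mulmxA => /(congr1 (mulmx (invmx (C ord0)))).
    by rewrite mulmx0 mulKmx ?C_unit.
  by move/(congr1 trmx): S_R_orth; rewrite !trmx_mul !trmxK trmx0 mulmxA.
have sub_psi := orthogonal_compl_sub rpsi rS_psi S_psi0 twisted_orth.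
exists (with_first (flat phi *m R *m pinvmx (flat psi)) (fun i => (invmx (C i))^T)).
apply: flat_inj; rewrite flat_local_op with_first0 rest_kron_with_first rest_kron_tr.
by rewrite trmxK mulmxKpV // -mulmxA R_inv mulmx1.
Qed.

(* The map phi |-> compl_state phi reflects SLOCC equivalence on maximal
   states, so finitely many classes downstairs give finitely many classes of
   maximal states upstairs (representatives chosen classically). *)
Theorem finite_maximal_classes_of_compl :
  finitely_many_classes F (dims ck) -> finitely_many_maximal_classes F (dims c0).
Proof.
move=> [n [r r_covers]].
pose in_class m (phi : tensor F (dims c0)) :=
  slocc_maximal phi /\ slocc_equiv (compl_state phi) (r m).
pose rep m := epsilon (inhabits (fun _ : midx (dims c0) => 0 : F)) (in_class m).
exists n, rep => phi phi_max.
have [m [phi_le_r r_le_phi]] := r_covers (compl_state phi); exists m.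
have [rep_max [rep_le_r r_le_rep]] : in_class m (rep m).
  by apply: epsilon_spec; exists phi.
have le_phi_rep := slocc_le_trans phi_le_r r_le_rep.
have le_rep_phi := slocc_le_trans rep_le_r r_le_phi.
by split; apply: compl_state_equiv_le => //; split.
Qed.

End ComplementDuality.

Theorem mainTheorem11 (C : numClosedFieldType) (K : nat) (d : nat -> nat) (k : nat) :
  (3 <= K)%N ->
  (forall i : nat, (1 <= i < K)%N -> (2 <= d i)%N) ->
  (1 <= k)%N ->
  d 0%N = (\prod_(1 <= i < K) d i - k)%N ->
  (1 <= d 0%N)%N ->
  finitely_many_classes C (fun i : 'I_K => if nat_of_ord i == 0%N then k else d i) ->
  finitely_many_maximal_classes C (fun i : 'I_K => d i).
Proof.
case: K => [//|K'] _ d_ge2 k_gt0 d0E d0_gt0 small_finite.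
have d_gt0 i : (1 <= i < K'.+1)%N -> (0 < d i)%N.
  by move=> /d_ge2; apply: leq_trans.
have dims_with c (i : 'I_K'.+1) : (0 < c)%N ->
    (if nat_of_ord i == 0%N then c else d i) = @dims K' d c.-1 i.
  move=> c_gt0; rewrite /dims; case: ifP => [_|i_neq0]; first by rewrite prednK.
  by rewrite prednK // d_gt0 // lt0n i_neq0 ltn_ord.
have small_dims : (fun i : 'I_K'.+1 => if nat_of_ord i == 0%N then k else d i) =
    @dims K' d k.-1 by apply: functional_extensionality => i; apply: dims_with.
have big_dims : (fun i : 'I_K'.+1 => d i) = @dims K' d (d 0%N).-1.
  apply: functional_extensionality => i; rewrite -dims_with //.
  by case: eqP => // i0; rewrite [nat_of_ord i]i0.
rewrite small_dims in small_finite; rewrite big_dims.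
apply: (finite_maximal_classes_of_compl _ small_finite).
rewrite card_Rest // !prednK // d0E subnK //.
by move: d0_gt0; rewrite d0E subn_gt0 => /ltnW.
Qed.
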